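(* There exists a timelike vector field $X$ on $\mathbb{X}_{-1}$ such that (1) $X$ extends to a timelike vector field on $\overline{\mathbb{X}}_{-1}$, and (2) the Riemannian metric $g_X$ obtained from the anti de Sitter metric $g$ by Wick rotation along $X$, namely $g_X(v,w)=g(v,w)-2\,\dfrac{g(v,X)g(w,X)}{g(X,X)}$, is complete.
   Context: Anti de Sitter space $\mathbb{X}_{-1}=PSL(2,\mathbb{R})$ with the Lorentzian metric $g$ of curvature $-1$ induced by $\eta(A,A)=-\det A$ on $SL(2,\mathbb{R})$. Klein model: $\mathbb{X}_{-1}=\{[A]:\det A>0\}\subset\mathbb{P}^3=\mathbb{P}(M(2,\mathbb{R}))$, with closure $\overline{\mathbb{X}}_{-1}$ and boundary $\partial\mathbb{X}_{-1}=\{\det=0\}$, which carries a conformal Lorentzian structure (so timelikeness of vectors makes sense on $\overline{\mathbb{X}}_{-1}$). *)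

From Stdlib Require Import Reals.
From Coquelicot Require Import Coquelicot.
Open Scope R_scope.

(** 2x2 real matrices, identified with R^4 = (R*R)*(R*R);
    A = ((a, b), (c, d)) stands for the matrix [[a, b], [c, d]]. *)
Definition M2 : Type := ((R * R) * (R * R))%type.

Definition ma (A : M2) : R := fst (fst A).
Definition mb (A : M2) : R := snd (fst A).
Definition mc (A : M2) : R := fst (snd A).
Definition md (A : M2) : R := snd (snd A).

Definition det (A : M2) : R := ma A * md A - mb A * mc A.

(** The bilinear form eta, polarization of eta(A,A) = - det A. *)
Definition eta (A B : M2) : R :=
  - (/ 2) * (ma A * md B + md A * ma B - mb A * mc B - mc A * mb B).

Definition mzero : M2 := ((0, 0), (0, 0)).

Definition std_basis (E : M2) : Prop :=
  E = ((1, 0), (0, 0)) \/ E = ((0, 1), (0, 0)) \/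
  E = ((0, 0), (1, 0)) \/ E = ((0, 0), (0, 1)).

Fixpoint Ck (n : nat) (U : M2 -> Prop) (f : M2 -> R) : Prop :=
  match n with
  | O => forall A, U A -> continuous f A
  | S k => (forall A, U A -> continuous f A) /\
           forall E, std_basis E ->
             exists g : M2 -> R,
               (forall A, U A -> is_derive (fun s : R => f (plus A (scal s E))) 0 (g A))
               /\ Ck k U g
  end.

Definition smooth_on (U : M2 -> Prop) (f : M2 -> R) : Prop := forall n, Ck n U f.

Definition smooth_map_on (U : M2 -> Prop) (F : M2 -> M2) : Prop :=
  smooth_on U (fun A => ma (F A)) /\ smooth_on U (fun A => mb (F A)) /\
  smooth_on U (fun A => mc (F A)) /\ smooth_on U (fun A => md (F A)).

(** Points of the Klein model: [A] with A <> 0; [A] = [B] iff B = lam A. *)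
Definition proj_eq (A B : M2) : Prop := exists lam : R, lam <> 0 /\ B = scal lam A.

(** Representatives of points of the closure of X_{-1} in P^3. *)
Definition closure_cone (A : M2) : Prop := A <> mzero /\ 0 <= det A.

(** A vector field on an open part of P^3 is encoded by a map F : R^4 -> R^4,
    the tangent vector at [A] being the class of F(A) in T_[A]P^3 = R^4 / R A
    (rescaled with A): we require F(lam A) = lam F(A) mod A. *)
Definition proj_equivariant (F : M2 -> M2) : Prop :=
  forall A lam, closure_cone A -> lam <> 0 ->
    exists mu : R, F (scal lam A) = plus (scal lam (F A)) (scal mu A).

(** The anti de Sitter metric g of curvature -1 at the point [A] (det A > 0),
    on tangent vectors represented by v, w in R^4 (mod A).  It is the pull back
    of eta|_{SL(2,R)} via A |-> A / sqrt(det A). *)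
Definition gAdS (A v w : M2) : R :=
  (det A * eta v w + eta A v * eta A w) / (det A ^ 2).

Definition gWick (F : M2 -> M2) (A v w : M2) : R :=
  gAdS A v w - 2 * gAdS A v (F A) * gAdS A w (F A) / gAdS A (F A) (F A).

(** Smooth vector field on the closure of X_{-1}, timelike everywhere:
    timelike for g in the interior; at boundary points (det A = 0) tangent to
    the boundary (eta(A, F A) = 0) and timelike for the conformal Lorentzian
    structure of the boundary (induced by eta on A^perp / R A). *)
Definition timelike_field_on_closure (F : M2 -> M2) : Prop :=
  (exists U : M2 -> Prop, open U /\ (forall A, closure_cone A -> U A)
                          /\ smooth_map_on U F)
  /\ proj_equivariant F
  /\ (forall A, 0 < det A -> gAdS A (F A) (F A) < 0)
  /\ (forall A, A <> mzero -> det A = 0 ->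
        eta A (F A) = 0 /\ eta (F A) (F A) < 0).

(** C^1 curves in X_{-1} (lifted to matrices of positive determinant),
    parametrized by [0,1], with derivative dc. *)
Definition admissible_curve (c dc : R -> M2) : Prop :=
  (forall t, 0 <= t <= 1 -> 0 < det (c t)) /\
  (forall t, 0 <= t <= 1 -> is_derive c t (dc t)) /\
  (forall t, 0 <= t <= 1 -> continuous dc t).

Definition wick_length (F : M2 -> M2) (c dc : R -> M2) : R :=
  RInt (fun t => sqrt (gWick F (c t) (dc t) (dc t))) 0 1.

Definition wick_dist_lt (F : M2 -> M2) (A B : M2) (eps : R) : Prop :=
  exists c dc : R -> M2, admissible_curve c dc /\
    proj_eq A (c 0) /\ proj_eq B (c 1) /\ wick_length F c dc < eps.

Definition wick_complete (F : M2 -> M2) : Prop :=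
  forall u : nat -> M2, (forall n, 0 < det (u n)) ->
    (forall eps, 0 < eps -> exists N : nat, forall m n, (N <= m)%nat -> (N <= n)%nat ->
        wick_dist_lt F (u m) (u n) eps) ->
    exists B : M2, 0 < det B /\
      forall eps, 0 < eps -> exists N : nat, forall n, (N <= n)%nat ->
        wick_dist_lt F (u n) B eps.

(* The field is [X(A) = J A + A J], [J] the rotation by [pi/2].  Split [A] into a
   conformal part [x] (in span{I, J}) and a symmetric traceless part [y], so that
   [det A = |x|^2 - |y|^2].  For a tangent vector [v] at [[A]], let [u] be its
   representative modulo [A] whose conformal part is orthogonal to [x]; then

     g_X(v, v) = |u|^2 / (2 det A) + (eta(A, u) / det A)^2.

   The first term dominates the Euclidean speed of the normalized point [A / |x|],
   the second the speed of [ln (det A / |x|^2)].  Along a g_X-Cauchy sequence the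
   normalized points are therefore Cauchy up to sign, hence converge in R^4 after
   fixing signs, and [det A / |x|^2] stays bounded below, so the limit lies in the
   interior.  Near such a limit straight segments have g_X-length at most a constant
   times their Euclidean length, which gives convergence for g_X. *)

From Stdlib Require Import Reals Lra Lia.
From Coquelicot Require Import Coquelicot.
Open Scope R_scope.

(** * The field [J A + A J] *)

(* [rot_field A = J A + A J] with [J = [[0, -1], [1, 0]]]. *)
Definition rot_field (A : M2) : M2 :=
  ((mb A - mc A, - (ma A + md A)), (ma A + md A, mb A - mc A)).

(* With [A = x1 I - x2 J + [[y1, y2], [y2, -y1]]], [conf_dot A B] is the inner
   product of the [(x1, x2)] parts, and [det A = rho2 A - y1^2 - y2^2]. *)
Definition conf_dot (A B : M2) : R :=
  ((ma A + md A) * (ma B + md B) + (mb A - mc A) * (mb B - mc B)) / 4.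

Definition rho2 (A : M2) : R := conf_dot A A.

Definition dot (A B : M2) : R := ma A * ma B + mb A * mb B + mc A * mc B + md A * md B.

(* The representative of the tangent vector [v] at [[A]] (defined modulo [A]) whose
   conformal part is orthogonal to that of [A]. *)
Definition horiz (A v : M2) : M2 := minus v (scal (conf_dot A v / rho2 A) A).

Ltac unfold_M2 :=
  unfold ma, mb, mc, md, minus, plus, opp, scal, mult; cbn.

Lemma M2_ext (A B : M2) :
  ma A = ma B -> mb A = mb B -> mc A = mc B -> md A = md B -> A = B.
Proof.
  destruct A as [[a b] [c d]], B as [[a' b'] [c' d']]; unfold ma, mb, mc, md; simpl.
  intros -> -> -> ->; reflexivity.
Qed.

Lemma det_le_rho2 A : det A <= rho2 A.
Proof.
  unfold rho2, conf_dot, det.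
  pose proof (pow2_ge_0 (ma A - md A)); pose proof (pow2_ge_0 (mb A + mc A)); nra.
Qed.

Lemma rho2_pos A : A <> mzero -> 0 <= det A -> 0 < rho2 A.
Proof.
  intros HA Hdet. destruct (Rle_lt_dec (rho2 A) 0) as [Hle|]; [exfalso|assumption].
  apply HA. destruct A as [[a b] [c d]].
  unfold rho2, conf_dot, det, ma, mb, mc, md in *; simpl in *.
  assert (E1 : Rsqr (a + d) = 0) by (unfold Rsqr; nra).
  assert (E2 : Rsqr (b - c) = 0) by (unfold Rsqr; nra).
  assert (E3 : Rsqr (a - d) = 0) by (unfold Rsqr; nra).
  assert (E4 : Rsqr (b + c) = 0) by (unfold Rsqr; nra).
  apply Rsqr_0_uniq in E1, E2, E3, E4.
  unfold mzero; f_equal; f_equal; lra.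
Qed.

Lemma eta_rot_field A : eta A (rot_field A) = 0.
Proof. unfold eta, rot_field, ma, mb, mc, md; simpl; ring. Qed.

Lemma eta_rot_field_rot_field A : eta (rot_field A) (rot_field A) = - 4 * rho2 A.
Proof. unfold eta, rot_field, rho2, conf_dot, ma, mb, mc, md; simpl; field. Qed.

Lemma gAdS_rot_field A : 0 < det A -> gAdS A (rot_field A) (rot_field A) = - 4 * rho2 A / det A.
Proof.
  intros H. unfold gAdS. rewrite eta_rot_field, eta_rot_field_rot_field. field. lra.
Qed.

Lemma gWick_rot_field A v : 0 < det A ->
  gWick rot_field A v v =
  eta v v / det A + (eta A v / det A) ^ 2 + eta v (rot_field A) ^ 2 / (2 * rho2 A * det A).
Proof.
  intros H. pose proof (det_le_rho2 A).
  unfold gWick. rewrite gAdS_rot_field by assumption. unfold gAdS.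
  rewrite eta_rot_field. field. lra.
Qed.

Lemma gWick_rot_field_horiz A v : 0 < det A ->
  gWick rot_field A v v =
  dot (horiz A v) (horiz A v) / (2 * det A) + (eta A (horiz A v) / det A) ^ 2.
Proof.
  intros H. pose proof (det_le_rho2 A) as Hr.
  rewrite gWick_rot_field by assumption.
  destruct A as [[a b] [c d]], v as [[e f] [g h]].
  unfold horiz, dot, eta, rot_field, rho2, conf_dot, det, ma, mb, mc, md in *.
  cbn in H, Hr. unfold_M2. field. split; lra.
Qed.

Section Continuity.
Context {U : UniformSpace}.
Implicit Types (f g : U -> R) (x : U).

Lemma continuous_Rplus f g x :
  continuous f x -> continuous g x -> continuous (fun y => f y + g y) x.
Proof. apply (continuous_plus f g). Qed.
Lemma continuous_Rminus f g x :
  continuous f x -> continuous g x -> continuous (fun y => f y - g y) x.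
Proof. apply (continuous_minus f g). Qed.
Lemma continuous_Rmult f g x :
  continuous f x -> continuous g x -> continuous (fun y => f y * g y) x.
Proof. apply (continuous_mult f g). Qed.
Lemma continuous_Ropp f x : continuous f x -> continuous (fun y => - f y) x.
Proof. apply (continuous_opp f). Qed.
Lemma continuous_Rinv_comp f x : continuous f x -> f x <> 0 -> continuous (fun y => / f y) x.
Proof. intros Hf Hx. apply (continuous_comp f Rinv); [exact Hf | now apply continuous_Rinv]. Qed.
Lemma continuous_sqrt_comp f x : continuous f x -> continuous (fun y => sqrt (f y)) x.
Proof. intros Hf. apply (continuous_comp f sqrt); [exact Hf | apply continuous_sqrt]. Qed.
Lemma continuous_pow_comp f x n : continuous f x -> continuous (fun y => f y ^ n) x.
Proof.
  intros Hf. induction n as [|n IH]; [apply continuous_const | now apply continuous_Rmult].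
Qed.
Lemma continuous_fst_comp {V W : UniformSpace} (h : U -> V * W) x :
  continuous h x -> continuous (fun y => fst (h y)) x.
Proof. intros Hh. apply (continuous_comp h fst); [exact Hh | apply continuous_fst]. Qed.
Lemma continuous_snd_comp {V W : UniformSpace} (h : U -> V * W) x :
  continuous h x -> continuous (fun y => snd (h y)) x.
Proof. intros Hh. apply (continuous_comp h snd); [exact Hh | apply continuous_snd]. Qed.

End Continuity.

(* Nonvanishing of the denominators is left as side goals. *)
Ltac continuity_M2 :=
  repeat match goal with
  | |- continuous (fun _ => _) _ => apply continuous_const
  | |- continuous (fun x => @?f x + @?g x) _ => apply (continuous_Rplus f g)
  | |- continuous (fun x => @?f x - @?g x) _ => apply (continuous_Rminus f g)
  | |- continuous (fun x => @?f x * @?g x) _ => apply (continuous_Rmult f g)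
  | |- continuous (fun x => @?f x / @?g x) _ => apply (continuous_Rmult f (fun x => / g x))
  | |- continuous (fun x => - @?f x) _ => apply (continuous_Ropp f)
  | |- continuous (fun x => / @?f x) _ => apply (continuous_Rinv_comp f)
  | |- continuous (fun x => sqrt (@?f x)) _ => apply (continuous_sqrt_comp f)
  | |- continuous (fun x => @?f x ^ _) _ => apply (continuous_pow_comp f)
  | |- continuous (fun x => fst (@?h x)) _ => apply (continuous_fst_comp h)
  | |- continuous (fun x => snd (@?h x)) _ => apply (continuous_snd_comp h)
  | |- continuous (fun x => x) _ => apply continuous_id
  | H : continuous ?h ?t |- continuous _ ?t => exact H
  end; cbv beta.

Lemma Ck_const n U k : Ck n U (fun _ => k).
Proof.
  revert k; induction n as [|n IH]; intros k; simpl.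
  - intros; apply continuous_const.
  - split; [intros; apply continuous_const|].
    intros E _. exists (fun _ => 0). split; [|apply IH].
    intros A _. apply (is_derive_const k).
Qed.

Lemma smooth_on_linear U (f : M2 -> R) :
  (forall A B, f (plus A B) = f A + f B) -> (forall l A, f (scal l A) = l * f A) ->
  (forall A, continuous f A) -> smooth_on U f.
Proof.
  intros Hadd Hscal Hcont [|n]; simpl; [intros; apply Hcont|].
  split; [intros; apply Hcont|].
  intros E _. exists (fun _ => f E). split; [|apply Ck_const].
  intros A _. apply (is_derive_ext (fun s => f A + s * f E)).
  - intros s. now rewrite Hadd, Hscal.
  - auto_derive; [exact I | ring].
Qed.

Lemma smooth_map_rot_field U : smooth_map_on U rot_field.
Proof.
  repeat split; apply smooth_on_linear; intros; unfold rot_field; unfold_M2;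
    solve [ring | continuity_M2].
Qed.

Lemma rot_field_timelike : timelike_field_on_closure rot_field.
Proof.
  split; [|split; [|split]].
  - exists (fun _ => True). split; [apply open_true|]. split; [easy | apply smooth_map_rot_field].
  - intros A l _ _. exists 0. apply M2_ext; unfold rot_field; unfold_M2; ring.
  - intros A HA. rewrite gAdS_rot_field by exact HA.
    pose proof (det_le_rho2 A). apply Rdiv_neg_pos; nra.
  - intros A HA Hdet. split; [apply eta_rot_field|].
    rewrite eta_rot_field_rot_field. pose proof (rho2_pos A HA (Req_le _ _ (eq_sym Hdet))). lra.
Qed.

(** * Euclidean estimates *)

Lemma norm_R2 (a b : R) : norm (a, b) = sqrt (a ^ 2 + b ^ 2).
Proof.
  change (sqrt (Rabs a ^ 2 + Rabs b ^ 2) = sqrt (a ^ 2 + b ^ 2)).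
  now rewrite !pow2_abs.
Qed.

Lemma dot_self_ge0 X : 0 <= dot X X.
Proof.
  unfold dot. pose proof (pow2_ge_0 (ma X)); pose proof (pow2_ge_0 (mb X)).
  pose proof (pow2_ge_0 (mc X)); pose proof (pow2_ge_0 (md X)). nra.
Qed.

Lemma norm_M2 X : norm X = sqrt (dot X X).
Proof.
  destruct X as [[a b] [c d]].
  change (sqrt (norm (a, b) ^ 2 + norm (c, d) ^ 2) = sqrt (dot ((a, b), (c, d)) ((a, b), (c, d)))).
  rewrite !norm_R2, !pow2_sqrt by (apply Rplus_le_le_0_compat; apply pow2_ge_0).
  unfold dot; unfold_M2. f_equal; ring.
Qed.

Lemma dot_self_norm X : dot X X = norm X ^ 2.
Proof. rewrite norm_M2, pow2_sqrt; [reflexivity | apply dot_self_ge0]. Qed.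

Lemma dot_sq_le X Y : dot X Y ^ 2 <= dot X X * dot Y Y.
Proof.
  destruct X as [[a b] [c d]], Y as [[e f] [g h]]. unfold dot; unfold_M2.
  assert (E : (a * a + b * b + c * c + d * d) * (e * e + f * f + g * g + h * h)
              - (a * e + b * f + c * g + d * h) * (a * e + b * f + c * g + d * h)
            = (a * f - b * e) ^ 2 + (a * g - c * e) ^ 2 + (a * h - d * e) ^ 2
              + (b * g - c * f) ^ 2 + (b * h - d * f) ^ 2 + (c * h - d * g) ^ 2) by ring.
  pose proof (pow2_ge_0 (a * f - b * e)); pose proof (pow2_ge_0 (a * g - c * e));
  pose proof (pow2_ge_0 (a * h - d * e)); pose proof (pow2_ge_0 (b * g - c * f));
  pose proof (pow2_ge_0 (b * h - d * f)); pose proof (pow2_ge_0 (c * h - d * g)).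
  simpl; lra.
Qed.

Lemma eta_sq_le X Y : eta X Y ^ 2 <= dot X X * dot Y Y / 4.
Proof.
  (* [eta X Y = - dot X (cof Y) / 2], and the cofactor map is an isometry. *)
  pose proof (dot_sq_le X ((md Y, - mc Y), (- mb Y, ma Y))) as H.
  destruct X as [[a b] [c d]], Y as [[e f] [g h]].
  unfold eta, dot, ma, mb, mc, md in *; cbn in *. nra.
Qed.

Lemma eta_self X : eta X X = - det X.
Proof. unfold eta, det. field. Qed.

Lemma abs_det_le X : Rabs (det X) <= dot X X / 2.
Proof.
  unfold det, dot. apply Rabs_le.
  pose proof (pow2_ge_0 (ma X + md X)); pose proof (pow2_ge_0 (mb X - mc X)).
  pose proof (pow2_ge_0 (ma X - md X)); pose proof (pow2_ge_0 (mb X + mc X)). split; nra.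
Qed.

Lemma dot_rot_field A : dot (rot_field A) (rot_field A) = 8 * rho2 A.
Proof. unfold dot, rot_field, rho2, conf_dot; unfold_M2; field. Qed.

Lemma gWick_rot_field_le A v : 0 < det A ->
  gWick rot_field A v v <= dot v v * (3 / (2 * det A) + dot A A / (4 * det A ^ 2)).
Proof.
  intros HA. pose proof (det_le_rho2 A) as Hr.
  rewrite gWick_rot_field by exact HA.
  assert (E1 : eta v v <= dot v v / 2)
    by (rewrite eta_self; pose proof (abs_det_le v) as Hv; apply Rabs_le_between in Hv; lra).
  pose proof (eta_sq_le A v) as E2.
  pose proof (eta_sq_le v (rot_field A)) as E3. rewrite dot_rot_field in E3.
  assert (Hsplit : dot v v * (3 / (2 * det A) + dot A A / (4 * det A ^ 2))
    - (eta v v / det A + (eta A v / det A) ^ 2 + eta v (rot_field A) ^ 2 / (2 * rho2 A * det A))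
    = (dot v v / 2 - eta v v) / det A + (dot A A * dot v v / 4 - eta A v ^ 2) / det A ^ 2
      + (dot v v * (8 * rho2 A) / 4 - eta v (rot_field A) ^ 2) / (2 * rho2 A * det A))
    by (field; lra).
  assert (0 <= (dot v v / 2 - eta v v) / det A) by (apply Rdiv_le_0_compat; lra).
  assert (0 <= (dot A A * dot v v / 4 - eta A v ^ 2) / det A ^ 2)
    by (apply Rdiv_le_0_compat; [lra | apply pow_lt; lra]).
  assert (0 <= (dot v v * (8 * rho2 A) / 4 - eta v (rot_field A) ^ 2) / (2 * rho2 A * det A))
    by (apply Rdiv_le_0_compat; [lra | nra]).
  lra.
Qed.

Lemma gWick_rot_field_ge0 A v : 0 < det A -> 0 <= gWick rot_field A v v.
Proof.
  intros H. rewrite gWick_rot_field_horiz by exact H.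
  pose proof (dot_self_ge0 (horiz A v)). pose proof (pow2_ge_0 (eta A (horiz A v) / det A)).
  assert (0 <= dot (horiz A v) (horiz A v) / (2 * det A)) by (apply Rdiv_le_0_compat; lra).
  lra.
Qed.

Lemma abs_le_mult_sqrt x K g : 0 <= K -> 0 <= g -> x ^ 2 <= K ^ 2 * g -> Rabs x <= K * sqrt g.
Proof.
  intros HK Hg H. rewrite <- (sqrt_pow2 K HK), <- sqrt_mult_alt by apply pow2_ge_0.
  rewrite <- sqrt_Rsqr_abs. apply sqrt_le_1_alt. unfold Rsqr. simpl in H. lra.
Qed.

Lemma abs_coords_le_norm X :
  Rabs (ma X) <= norm X /\ Rabs (mb X) <= norm X /\ Rabs (mc X) <= norm X /\ Rabs (md X) <= norm X.
Proof.
  rewrite norm_M2, <- (Rmult_1_l (sqrt (dot X X))). pose proof (dot_self_ge0 X).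
  unfold dot in *.
  pose proof (pow2_ge_0 (ma X)); pose proof (pow2_ge_0 (mb X));
  pose proof (pow2_ge_0 (mc X)); pose proof (pow2_ge_0 (md X)).
  repeat split; apply abs_le_mult_sqrt; lra.
Qed.

Lemma norm_le_sum_abs X : norm X <= Rabs (ma X) + Rabs (mb X) + Rabs (mc X) + Rabs (md X).
Proof.
  pose proof (Rabs_pos (ma X)); pose proof (Rabs_pos (mb X));
  pose proof (Rabs_pos (mc X)); pose proof (Rabs_pos (md X)).
  rewrite norm_M2, <- (Rabs_pos_eq (_ + _ + _ + _)) by lra.
  rewrite <- (Rmult_1_l (Rabs _)), <- sqrt_Rsqr_abs, Rsqr_pow2.
  rewrite <- sqrt_1 at 1. rewrite <- sqrt_mult_alt by lra. apply sqrt_le_1_alt.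
  replace (dot X X) with (Rabs (ma X) ^ 2 + Rabs (mb X) ^ 2 + Rabs (mc X) ^ 2 + Rabs (md X) ^ 2)
    by (rewrite !pow2_abs; unfold dot; ring).
  nra.
Qed.

(** * Cauchy sequences up to sign *)

Lemma M2_complete (v : nat -> M2) :
  (forall eps, 0 < eps -> exists N, forall m n, (N <= m)%nat -> (N <= n)%nat ->
     norm (minus (v m) (v n)) < eps) ->
  exists B, forall eps, 0 < eps -> exists N, forall n, (N <= n)%nat -> norm (minus (v n) B) < eps.
Proof.
  intros Hv.
  assert (Hcoord : forall k : M2 -> R, (forall X Y, Rabs (k X - k Y) <= norm (minus X Y)) ->
                     { l | Un_cv (fun n => k (v n)) l }).
  { intros k Hk. apply Rcomplete.R_complete. intros eps Heps. destruct (Hv eps Heps) as [N HN].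
    exists N. intros m n Hm Hn. unfold R_dist. eapply Rle_lt_trans; [apply Hk | apply HN]; lia. }
  destruct (Hcoord ma) as [la Ha]; [intros X Y; apply (abs_coords_le_norm (minus X Y))|].
  destruct (Hcoord mb) as [lb Hb]; [intros X Y; apply (abs_coords_le_norm (minus X Y))|].
  destruct (Hcoord mc) as [lc Hc]; [intros X Y; apply (abs_coords_le_norm (minus X Y))|].
  destruct (Hcoord md) as [ld Hd]; [intros X Y; apply (abs_coords_le_norm (minus X Y))|].
  exists ((la, lb), (lc, ld)). intros eps Heps.
  destruct (Ha (eps / 4)) as [Na HNa]; [lra|]. destruct (Hb (eps / 4)) as [Nb HNb]; [lra|].
  destruct (Hc (eps / 4)) as [Nc HNc]; [lra|]. destruct (Hd (eps / 4)) as [Nd HNd]; [lra|].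
  exists (Nat.max (Nat.max Na Nb) (Nat.max Nc Nd)). intros n Hn.
  eapply Rle_lt_trans; [apply norm_le_sum_abs|].
  specialize (HNa n ltac:(lia)). specialize (HNb n ltac:(lia)).
  specialize (HNc n ltac:(lia)). specialize (HNd n ltac:(lia)).
  unfold R_dist in *. change (Rabs (ma (v n) - la) + Rabs (mb (v n) - lb)
    + Rabs (mc (v n) - lc) + Rabs (md (v n) - ld) < eps). lra.
Qed.

Section SignLift.
Context {V : NormedModule R_AbsRing}.

Definition sign_close (eps : R) (x y : V) : Prop :=
  norm (minus x y) < eps \/ norm (plus x y) < eps.

Lemma norm_minus_sym (x y : V) : norm (minus x y) = norm (minus y x).
Proof. now rewrite <- norm_opp, opp_minus. Qed.

Lemma norm_minus_opp_l (x y : V) : norm (minus (opp x) y) = norm (plus x y).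
Proof.
  rewrite <- (norm_opp (minus (opp x) y)). unfold minus. f_equal.
  etransitivity; [apply opp_plus|]. now rewrite !opp_opp.
Qed.

Lemma norm_plus_opp_l (x y : V) : norm (plus (opp x) y) = norm (minus x y).
Proof. rewrite norm_minus_sym. f_equal. apply plus_comm. Qed.

Lemma norm_minus_opp_r (x y : V) : norm (minus x (opp y)) = norm (plus x y).
Proof. unfold minus. now rewrite opp_opp. Qed.

Lemma sign_close_opp_l eps (x y : V) : sign_close eps (opp x) y <-> sign_close eps x y.
Proof. unfold sign_close. rewrite norm_minus_opp_l, norm_plus_opp_l. tauto. Qed.

Lemma sign_close_opp_r eps (x y : V) : sign_close eps x (opp y) <-> sign_close eps x y.
Proof. unfold sign_close. rewrite norm_minus_opp_r. tauto. Qed.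

Lemma sign_close_sym eps (x y : V) : sign_close eps x y -> sign_close eps y x.
Proof.
  unfold sign_close. rewrite norm_minus_sym. replace (plus y x) with (plus x y) by apply plus_comm.
  tauto.
Qed.

Lemma sign_close_signs eps (x y x' y' : V) :
  (x' = x \/ x' = opp x) -> (y' = y \/ y' = opp y) ->
  (sign_close eps x' y' <-> sign_close eps x y).
Proof.
  intros [-> | ->] [-> | ->]; rewrite ?sign_close_opp_l, ?sign_close_opp_r; tauto.
Qed.

Lemma norm_scal_R (l : R) (x : V) : norm (scal l x) = Rabs l * norm x.
Proof.
  destruct (Req_dec l 0) as [->|Hl].
  - pose proof (norm_scal 0 x) as H. change (abs 0) with (Rabs 0) in H.
    rewrite Rabs_R0, Rmult_0_l in *. apply Rle_antisym; [exact H | apply norm_ge_0].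
  - apply Rle_antisym; [exact (norm_scal l x)|].
    assert (Hx : x = scal (/ l) (scal l x)).
    { rewrite scal_assoc. change (mult (/ l) l) with (/ l * l). rewrite Rinv_l by exact Hl.
      symmetry. exact (scal_one x). }
    assert (H : norm x <= Rabs (/ l) * norm (scal l x))
      by (rewrite Hx at 1; exact (norm_scal (/ l) (scal l x))).
    rewrite Rabs_inv in H. pose proof (Rabs_pos_lt l Hl).
    apply (Rmult_le_compat_l (Rabs l)) in H; [|lra].
    rewrite <- Rmult_assoc, Rinv_r, Rmult_1_l in H by lra. exact H.
Qed.

Lemma norm_le_sign_close (x y : V) : 2 * norm x <= norm (minus x y) + norm (plus x y).
Proof.
  replace (2 * norm x) with (norm (scal 2 x))
    by (rewrite norm_scal_R, Rabs_pos_eq; lra).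
  replace (scal 2 x) with (plus (minus x y) (plus x y)).
  { apply norm_triangle. }
  replace 2 with (plus (one : R_Ring) one) by (unfold plus, one; simpl; ring).
  rewrite scal_distr_r, scal_one. unfold minus.
  rewrite <- plus_assoc, (plus_assoc (opp y)), (plus_comm (opp y)), <- plus_assoc.
  now rewrite plus_opp_l, plus_zero_r.
Qed.

Lemma cauchy_sign_lift (w : nat -> V) r : 0 < r -> (forall n, r <= norm (w n)) ->
  (forall eps, 0 < eps -> exists N, forall m n, (N <= m)%nat -> (N <= n)%nat ->
     sign_close eps (w m) (w n)) ->
  exists v : nat -> V, (forall n, v n = w n \/ v n = opp (w n)) /\
    forall eps, 0 < eps -> exists N, forall m n, (N <= m)%nat -> (N <= n)%nat ->
      norm (minus (v m) (v n)) < eps.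
Proof.
  intros Hr Hw Hc.
  destruct (Hc (r / 2)) as [K HK]; [lra|].
  set (v := fun n => if Rlt_dec (norm (minus (w n) (w K))) (r / 2) then w n else opp (w n)).
  assert (Hv : forall n, v n = w n \/ v n = opp (w n))
    by (intros n; unfold v; destruct Rlt_dec; auto).
  assert (HvK : forall n, (K <= n)%nat -> norm (minus (v n) (w K)) < r / 2).
  { intros n Hn. unfold v. destruct Rlt_dec as [|Hge]; [assumption|].
    rewrite norm_minus_opp_l.
    destruct (HK n K Hn (le_n K)) as [H|H]; [contradiction | exact H]. }
  exists v. split; [exact Hv|].
  intros eps Heps. destruct (Hc (Rmin eps r)) as [N HN]; [now apply Rmin_glb_lt|].
  exists (Nat.max N K). intros m n Hm Hn.
  assert (Hmn : sign_close (Rmin eps r) (v m) (v n)).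
  { apply (sign_close_signs _ (w m) (w n)); [apply Hv | apply Hv | apply HN; lia]. }
  destruct Hmn as [H|H]; [pose proof (Rmin_l eps r); lra|exfalso].
  assert (Hnear : norm (minus (v m) (v n)) < r).
  { rewrite (minus_trans (w K)). eapply Rle_lt_trans; [apply norm_triangle|].
    rewrite (norm_minus_sym (w K)).
    pose proof (HvK m ltac:(lia)). pose proof (HvK n ltac:(lia)). lra. }
  pose proof (norm_le_sign_close (v m) (v n)). pose proof (Rmin_r eps r).
  assert (norm (v m) = norm (w m))
    by (destruct (Hv m) as [-> | ->]; [|apply norm_opp]; reflexivity).
  pose proof (Hw m). lra.
Qed.

End SignLift.

(** * Calculus along curves *)

Definition normalize (A : M2) : M2 := scal (/ sqrt (rho2 A)) A.

Definition ldet (A : M2) : R := ln (det A / rho2 A).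

Lemma dot_normalize A e : dot (normalize A) e = dot A e / sqrt (rho2 A).
Proof. unfold normalize, dot; unfold_M2; unfold Rdiv; ring. Qed.

Lemma dot_horiz A v e : dot (horiz A v) e = dot v e - conf_dot A v / rho2 A * dot A e.
Proof. unfold horiz, dot; unfold_M2; ring. Qed.

Lemma eta_horiz A v : eta A (horiz A v) = eta A v + conf_dot A v / rho2 A * det A.
Proof. unfold horiz, eta, det; unfold_M2. set (k := conf_dot A v / rho2 A). field. Qed.

Lemma is_derive_eq (f : R -> R) (t l l' : R) : is_derive f t l -> l = l' -> is_derive f t l'.
Proof. now intros H <-. Qed.

Lemma is_derive_div_sqrt (P Q : R -> R) t dP dQ :
  is_derive P t dP -> is_derive Q t dQ -> 0 < Q t ->
  is_derive (fun s => P s / sqrt (Q s)) t ((dP - P t * dQ / (2 * Q t)) / sqrt (Q t)).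
Proof.
  intros HP HQ HQt. pose proof (sqrt_lt_R0 _ HQt) as Hs.
  auto_derive.
  - repeat split; try (eexists; eassumption); lra.
  - rewrite (is_derive_unique (fun x : R => P x) t _ HP),
      (is_derive_unique (fun x : R => Q x) t _ HQ).
    assert (HQs : Q t = sqrt (Q t) * sqrt (Q t)) by (rewrite sqrt_sqrt; lra).
    set (r := sqrt (Q t)) in *. rewrite HQs. field. lra.
Qed.

Lemma is_derive_ln_div (P Q : R -> R) t dP dQ :
  is_derive P t dP -> is_derive Q t dQ -> 0 < P t -> 0 < Q t ->
  is_derive (fun s => ln (P s / Q s)) t (dP / P t - dQ / Q t).
Proof.
  intros HP HQ HPt HQt. auto_derive.
  - repeat split; try (eexists; eassumption); try lra. apply Rdiv_lt_0_compat; lra.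
  - rewrite (is_derive_unique (fun x : R => P x) t _ HP),
      (is_derive_unique (fun x : R => Q x) t _ HQ).
    field. lra.
Qed.

Lemma is_derive_fst {V W : NormedModule R_AbsRing} (f : R -> V * W) t l :
  is_derive f t l -> is_derive (fun s => fst (f s)) t (fst l).
Proof.
  intros H. apply (filterdiff_comp' f fst t _ fst H).
  apply filterdiff_linear, is_linear_fst.
Qed.

Lemma is_derive_snd {V W : NormedModule R_AbsRing} (f : R -> V * W) t l :
  is_derive f t l -> is_derive (fun s => snd (f s)) t (snd l).
Proof.
  intros H. apply (filterdiff_comp' f snd t _ snd H).
  apply filterdiff_linear, is_linear_snd.
Qed.

(* [auto_derive] cannot see through the entries [ma (c s)] of a curve; this lemma
   replaces them by opaque real functions. *)
Lemma is_derive_along (f : M2 -> R) (c : R -> M2) t dc l :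
  is_derive c t dc ->
  (forall a b c' d : R -> R,
     is_derive a t (ma dc) -> is_derive b t (mb dc) ->
     is_derive c' t (mc dc) -> is_derive d t (md dc) ->
     c t = ((a t, b t), (c' t, d t)) ->
     is_derive (fun s => f ((a s, b s), (c' s, d s))) t l) ->
  is_derive (fun s => f (c s)) t l.
Proof.
  intros Hc H.
  apply (is_derive_ext (fun s => f ((ma (c s), mb (c s)), (mc (c s), md (c s))))).
  { intros s. now destruct (c s) as [[? ?] [? ?]]. }
  apply H; unfold ma, mb, mc, md.
  - apply (is_derive_fst (fun s => fst (c s))), is_derive_fst, Hc.
  - apply (is_derive_snd (fun s => fst (c s))), is_derive_fst, Hc.
  - apply (is_derive_fst (fun s => snd (c s))), is_derive_snd, Hc.
  - apply (is_derive_snd (fun s => snd (c s))), is_derive_snd, Hc.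
  - now destruct (c t) as [[? ?] [? ?]].
Qed.

Ltac rewrite_Derive H :=
  match type of H with is_derive ?f ?t _ =>
    rewrite (is_derive_unique (fun x : R => f x) t _ H) end.

Ltac derive_entries :=
  let Ha := fresh "Ha" in let Hb := fresh "Hb" in
  let Hc := fresh "Hc" in let Hd := fresh "Hd" in let Ect := fresh "Ect" in
  intros ?a ?b ?c ?d Ha Hb Hc Hd Ect; rewrite ?Ect;
  unfold rho2, dot, conf_dot, det, eta, ma, mb, mc, md in *; cbn [fst snd] in *;
  auto_derive; [repeat split; eexists; eassumption|];
  rewrite_Derive Ha; rewrite_Derive Hb; rewrite_Derive Hc; rewrite_Derive Hd.

Section Curve.
Variables (c : R -> M2) (t : R) (dc : M2).
Hypothesis Hc : is_derive c t dc.

Lemma is_derive_dot_l e : is_derive (fun s => dot (c s) e) t (dot dc e).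
Proof. apply (is_derive_along (fun X => dot X e) c t dc); [exact Hc|]; derive_entries. ring. Qed.

Lemma is_derive_rho2 : is_derive (fun s => rho2 (c s)) t (2 * conf_dot (c t) dc).
Proof. apply (is_derive_along rho2 c t dc); [exact Hc|]; derive_entries. field. Qed.

Lemma is_derive_det : is_derive (fun s => det (c s)) t (- 2 * eta (c t) dc).
Proof. apply (is_derive_along det c t dc); [exact Hc|]; derive_entries. field. Qed.

End Curve.

Lemma is_derive_dot_normalize (c : R -> M2) t dc e :
  is_derive c t dc -> 0 < rho2 (c t) ->
  is_derive (fun s => dot (normalize (c s)) e) t
    (dot (horiz (c t) dc) e / sqrt (rho2 (c t))).
Proof.
  intros Hc Hr. pose proof (sqrt_lt_R0 _ Hr).
  apply (is_derive_ext (fun s => dot (c s) e / sqrt (rho2 (c s)))).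
  { intros s. symmetry. apply dot_normalize. }
  eapply is_derive_eq.
  { apply is_derive_div_sqrt; [apply is_derive_dot_l, Hc | apply is_derive_rho2, Hc | exact Hr]. }
  rewrite dot_horiz. field. lra.
Qed.

Lemma is_derive_ldet (c : R -> M2) t dc :
  is_derive c t dc -> 0 < det (c t) ->
  is_derive (fun s => ldet (c s)) t (- 2 * eta (c t) (horiz (c t) dc) / det (c t)).
Proof.
  intros Hc Hd. pose proof (det_le_rho2 (c t)).
  eapply is_derive_eq.
  { apply is_derive_ln_div; [apply is_derive_det, Hc | apply is_derive_rho2, Hc | lra | lra]. }
  rewrite eta_horiz. field. lra.
Qed.

Lemma continuous_of_is_derive (c : R -> M2) t dc : is_derive c t dc -> continuous c t.
Proof.
  intros H. apply (ex_derive_continuous (K := R_AbsRing)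
    (V := prod_NormedModule R_AbsRing
            (prod_NormedModule R_AbsRing R_NormedModule R_NormedModule)
            (prod_NormedModule R_AbsRing R_NormedModule R_NormedModule))).
  now exists dc.
Qed.

Section Integrands.
Variables (c dc : R -> M2) (t : R).
Hypotheses (Hc : continuous c t) (Hdc : continuous dc t) (Hdet : 0 < det (c t)).

Lemma continuous_wick_integrand :
  continuous (fun s => sqrt (gWick rot_field (c s) (dc s) (dc s))) t.
Proof.
  assert (H1 : det (c t) ^ 2 <> 0) by (apply pow_nonzero; lra).
  assert (H2 : gAdS (c t) (rot_field (c t)) (rot_field (c t)) <> 0).
  { rewrite gAdS_rot_field by exact Hdet. pose proof (det_le_rho2 (c t)).
    apply Rlt_not_eq, Rdiv_neg_pos; lra. }
  unfold gWick, gAdS, rot_field, eta, det, ma, mb, mc, md in *; cbn [fst snd] in *.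
  continuity_M2; assumption.
Qed.

Lemma continuous_dot_horiz e :
  continuous (fun s => dot (horiz (c s) (dc s)) e / sqrt (rho2 (c s))) t.
Proof.
  pose proof (det_le_rho2 (c t)).
  assert (H1 : rho2 (c t) <> 0) by lra.
  assert (H2 : sqrt (rho2 (c t)) <> 0) by (apply Rgt_not_eq, sqrt_lt_R0; lra).
  apply (continuous_ext (fun s => (dot (dc s) e - conf_dot (c s) (dc s) / rho2 (c s) * dot (c s) e)
                                  / sqrt (rho2 (c s)))).
  { intros s. now rewrite dot_horiz. }
  unfold rho2, conf_dot, dot, ma, mb, mc, md in *; cbn [fst snd] in *.
  continuity_M2; assumption.
Qed.

Lemma continuous_eta_horiz :
  continuous (fun s => - 2 * eta (c s) (horiz (c s) (dc s)) / det (c s)) t.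
Proof.
  pose proof (det_le_rho2 (c t)).
  assert (H1 : rho2 (c t) <> 0) by lra. assert (H2 : det (c t) <> 0) by lra.
  apply (continuous_ext (fun s => - 2 * (eta (c s) (dc s)
                                          + conf_dot (c s) (dc s) / rho2 (c s) * det (c s))
                                  / det (c s))).
  { intros s. now rewrite eta_horiz. }
  unfold rho2, conf_dot, eta, det, ma, mb, mc, md in *; cbn [fst snd] in *.
  continuity_M2; assumption.
Qed.

End Integrands.

Lemma ex_RInt_wick_integrand c dc : admissible_curve c dc ->
  ex_RInt (fun s => sqrt (gWick rot_field (c s) (dc s) (dc s))) 0 1.
Proof.
  intros (Hpos & Hder & Hdc). apply (ex_RInt_continuous (V := R_CompleteNormedModule)).
  rewrite Rmin_left, Rmax_right by lra. intros s Hs.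
  apply continuous_wick_integrand;
    [eapply continuous_of_is_derive, Hder | apply Hdc | apply Hpos]; exact Hs.
Qed.

Lemma wick_length_ge0 c dc : admissible_curve c dc -> 0 <= wick_length rot_field c dc.
Proof.
  intros Hadm. apply RInt_ge_0; [lra | now apply ex_RInt_wick_integrand |].
  intros; apply sqrt_pos.
Qed.

Lemma abs_sub_le_wick_length c dc (f f' : R -> R) K :
  admissible_curve c dc ->
  (forall t, 0 <= t <= 1 -> is_derive f t (f' t)) ->
  (forall t, 0 <= t <= 1 -> continuous f' t) ->
  (forall t, 0 <= t <= 1 -> Rabs (f' t) <= K * sqrt (gWick rot_field (c t) (dc t) (dc t))) ->
  Rabs (f 1 - f 0) <= K * wick_length rot_field c dc.
Proof.
  intros Hadm Hf Hf' Hbound.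
  pose proof (ex_RInt_wick_integrand c dc Hadm) as Hint.
  assert (HI : is_RInt f' 0 1 (f 1 - f 0)).
  { apply (is_RInt_derive (V := R_CompleteNormedModule));
      rewrite Rmin_left, Rmax_right by lra; auto. }
  rewrite <- (is_RInt_unique _ _ _ _ HI).
  eapply Rle_trans; [apply abs_RInt_le; [lra | eexists; exact HI]|].
  unfold wick_length. change (K * ?I) with (scal K I).
  rewrite <- (RInt_scal (V := R_CompleteNormedModule) _ 0 1 K Hint).
  apply RInt_le; [lra | | apply (ex_RInt_scal (V := R_CompleteNormedModule)), Hint |].
  - apply (ex_RInt_continuous (V := R_CompleteNormedModule)).
    rewrite Rmin_left, Rmax_right by lra. intros s Hs.
    apply (continuous_comp f' Rabs); [auto | apply continuous_Rabs].
  - intros s Hs. apply Hbound. lra.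
Qed.

(** * Lower bounds for the Wick distance *)

Lemma dot_horiz_div_rho2_le A v : 0 < det A ->
  dot (horiz A v) (horiz A v) / rho2 A <= 2 * gWick rot_field A v v.
Proof.
  intros H. pose proof (det_le_rho2 A). set (h := horiz A v).
  rewrite gWick_rot_field_horiz by exact H. fold h.
  pose proof (dot_self_ge0 h). pose proof (pow2_ge_0 (eta A h / det A)).
  assert (dot h h / rho2 A <= dot h h / det A)
    by (apply Rmult_le_compat_l; [lra | apply Rinv_le_contravar; lra]).
  assert (dot h h / (2 * det A) = dot h h / det A / 2) by (field; lra).
  lra.
Qed.

Lemma abs_dot_horiz_le A v e : 0 < det A ->
  Rabs (dot (horiz A v) e / sqrt (rho2 A)) <= 2 * norm e * sqrt (gWick rot_field A v v).
Proof.
  intros H. pose proof (det_le_rho2 A) as Hr. set (h := horiz A v).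
  pose proof (dot_horiz_div_rho2_le A v H) as Hh. fold h in Hh.
  pose proof (gWick_rot_field_ge0 A v H) as Hg.
  apply abs_le_mult_sqrt; [pose proof (norm_ge_0 e); lra | exact Hg |].
  pose proof (dot_sq_le h e) as Hcs. rewrite (dot_self_norm e) in Hcs.
  assert (Hq : (dot h e / sqrt (rho2 A)) ^ 2 = dot h e ^ 2 / rho2 A).
  { unfold Rdiv. rewrite Rpow_mult_distr, pow_inv, pow2_sqrt by lra. reflexivity. }
  rewrite Hq.
  apply Rle_trans with (dot h h / rho2 A * norm e ^ 2).
  - unfold Rdiv. rewrite Rmult_assoc, (Rmult_comm (/ rho2 A)), <- Rmult_assoc.
    apply Rmult_le_compat_r; [left; apply Rinv_0_lt_compat; lra | exact Hcs].
  - pose proof (pow2_ge_0 (norm e)). nra.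
Qed.

Lemma abs_ldet_derivative_le A v : 0 < det A ->
  Rabs (- 2 * eta A (horiz A v) / det A) <= 2 * sqrt (gWick rot_field A v v).
Proof.
  intros H. apply abs_le_mult_sqrt; [lra | now apply gWick_rot_field_ge0 |].
  rewrite gWick_rot_field_horiz by exact H.
  assert (0 <= dot (horiz A v) (horiz A v) / (2 * det A))
    by (apply Rdiv_le_0_compat; [apply dot_self_ge0 | lra]).
  replace ((- 2 * eta A (horiz A v) / det A) ^ 2) with (2 ^ 2 * (eta A (horiz A v) / det A) ^ 2)
    by (field; lra).
  lra.
Qed.

Lemma dot_minus_l X Y Z : dot (minus X Y) Z = dot X Z - dot Y Z.
Proof. unfold dot; unfold_M2. ring. Qed.

Lemma norm_normalize_sub_le c dc : admissible_curve c dc ->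
  norm (minus (normalize (c 1)) (normalize (c 0))) <= 2 * wick_length rot_field c dc.
Proof.
  intros Hadm. pose proof (wick_length_ge0 c dc Hadm) as HL.
  (* Test the displacement [e] against itself: [s |-> dot (normalize (c s)) e]
     increases by [|e|^2] along the curve. *)
  set (e := minus (normalize (c 1)) (normalize (c 0))).
  assert (H := abs_sub_le_wick_length c dc (fun s => dot (normalize (c s)) e)
    (fun s => dot (horiz (c s) (dc s)) e / sqrt (rho2 (c s))) (2 * norm e) Hadm).
  destruct Hadm as (Hpos & Hder & Hdc).
  cbv beta in H. rewrite <- dot_minus_l in H. fold e in H.
  rewrite dot_self_norm, Rabs_pos_eq in H by apply pow2_ge_0.
  pose proof (norm_ge_0 e).
  enough (norm e ^ 2 <= 2 * norm e * wick_length rot_field c dc) by nra.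
  apply H; intros s Hs; pose proof (Hpos s Hs); pose proof (det_le_rho2 (c s)).
  - apply is_derive_dot_normalize; [apply Hder, Hs | lra].
  - apply continuous_dot_horiz; [eapply continuous_of_is_derive, Hder | apply Hdc | ]; auto.
  - now apply abs_dot_horiz_le.
Qed.

Lemma ldet_sub_le c dc : admissible_curve c dc ->
  Rabs (ldet (c 1) - ldet (c 0)) <= 2 * wick_length rot_field c dc.
Proof.
  intros Hadm. apply (abs_sub_le_wick_length c dc (fun s => ldet (c s))
    (fun s => - 2 * eta (c s) (horiz (c s) (dc s)) / det (c s))); [exact Hadm | ..];
  destruct Hadm as (Hpos & Hder & Hdc); intros s Hs.
  - apply is_derive_ldet; auto.
  - apply continuous_eta_horiz; [eapply continuous_of_is_derive, Hder | apply Hdc | ]; auto.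
  - now apply abs_ldet_derivative_le, Hpos.
Qed.

Lemma rho2_scal l A : rho2 (scal l A) = l ^ 2 * rho2 A.
Proof. unfold rho2, conf_dot; unfold_M2. field. Qed.

Lemma det_scal l A : det (scal l A) = l ^ 2 * det A.
Proof. unfold det; unfold_M2. ring. Qed.

Lemma normalize_scal l A : l <> 0 -> 0 < rho2 A ->
  normalize (scal l A) = normalize A \/ normalize (scal l A) = opp (normalize A).
Proof.
  intros Hl Hr. pose proof (sqrt_lt_R0 _ Hr).
  unfold normalize. rewrite rho2_scal, sqrt_mult_alt, <- Rsqr_pow2, sqrt_Rsqr_abs
    by apply pow2_ge_0.
  destruct (Rlt_or_le 0 l).
  - rewrite Rabs_pos_eq by lra. left. apply M2_ext; unfold_M2; field; lra.
  - rewrite Rabs_left by lra. right. apply M2_ext; unfold_M2; field; lra.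
Qed.

Lemma ldet_scal l A : l <> 0 -> 0 < rho2 A -> ldet (scal l A) = ldet A.
Proof.
  intros Hl Hr. unfold ldet. rewrite det_scal, rho2_scal. f_equal. field.
  split; solve [assumption | lra].
Qed.

Lemma wick_dist_lt_normalize A B eps : 0 < det A -> 0 < det B ->
  wick_dist_lt rot_field A B eps -> sign_close (2 * eps) (normalize A) (normalize B).
Proof.
  intros HA HB (c & dc & Hadm & [l [Hl E0]] & [m [Hm E1]] & HL).
  pose proof (norm_normalize_sub_le c dc Hadm) as H.
  pose proof (det_le_rho2 A). pose proof (det_le_rho2 B).
  apply sign_close_sym, (sign_close_signs _ _ _ (normalize (c 1)) (normalize (c 0))).
  - rewrite E1. apply normalize_scal; [exact Hm | lra].
  - rewrite E0. apply normalize_scal; [exact Hl | lra].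
  - left. eapply Rle_lt_trans; [exact H | lra].
Qed.

Lemma wick_dist_lt_ldet A B eps : 0 < det A -> 0 < det B ->
  wick_dist_lt rot_field A B eps -> Rabs (ldet A - ldet B) < 2 * eps.
Proof.
  intros HA HB (c & dc & Hadm & [l [Hl E0]] & [m [Hm E1]] & HL).
  pose proof (ldet_sub_le c dc Hadm) as H.
  rewrite E0, E1, !ldet_scal, Rabs_minus_sym in H by (auto; pose proof (det_le_rho2 A);
    pose proof (det_le_rho2 B); lra).
  lra.
Qed.

Lemma wick_dist_lt_det_pos F A B eps : wick_dist_lt F A B eps -> 0 < det B.
Proof.
  intros (c & dc & [Hpos _] & _ & [m [Hm E1]] & _).
  pose proof (Hpos 1 ltac:(lra)) as H. rewrite E1, det_scal in H.
  pose proof (pow2_gt_0 m Hm) as Hm2.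
  destruct (Rlt_or_le 0 (det B)) as [|Hle]; [assumption|].
  pose proof (Rmult_le_compat_l _ _ _ (Rlt_le _ _ Hm2) Hle). lra.
Qed.

Lemma wick_dist_lt_proj_eq_l F A A' B eps :
  proj_eq A A' -> wick_dist_lt F A' B eps -> wick_dist_lt F A B eps.
Proof.
  intros [l [Hl ->]] (c & dc & Hadm & [m [Hm E0]] & HB & HL).
  exists c, dc. split; [exact Hadm|]. split; [|split; assumption].
  exists (m * l). split; [now apply Rmult_integral_contrapositive|].
  rewrite E0, scal_assoc. reflexivity.
Qed.

(** * Short segments *)

Lemma det_segment P V t : det (plus P (scal t V)) = det P - 2 * t * eta P V - t ^ 2 * eta V V.
Proof. unfold det, eta; unfold_M2. field. Qed.

Lemma is_derive_segment (P V : M2) t : is_derive (fun s => plus P (scal s V)) t V.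
Proof.
  pose proof (is_derive_plus (fun _ => P) (fun s => scal s V) t zero (scal one V)
    (is_derive_const P t) (is_derive_scal_l (fun s => s) t one V (is_derive_id t))) as H.
  now rewrite plus_zero_l, scal_one in H.
Qed.

Lemma sqrt_gWick_rot_field_le A v d : 0 < d <= 2 -> d / 2 <= det A -> dot A A <= 6 ->
  sqrt (gWick rot_field A v v) <= 4 * norm v / d.
Proof.
  intros [Hd Hd2] HD Hq. pose proof (norm_ge_0 v).
  set (D := det A) in *. set (q := dot A A) in *. set (m := norm v) in *.
  assert (Hnum : 0 <= 64 * D ^ 2 - 6 * D * d ^ 2 - q * d ^ 2).
  { assert (0 <= D * d * (2 - d)) by (apply Rmult_le_pos; nra).
    assert (0 <= (6 - q) * d ^ 2) by (apply Rmult_le_pos; nra).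
    assert (0 <= D * (2 * D - d)) by nra. assert (0 <= d * (2 * D - d)) by nra.
    nra. }
  assert (Hfrac : 3 / (2 * D) + q / (4 * D ^ 2) <= 16 / d ^ 2).
  { assert (16 / d ^ 2 - (3 / (2 * D) + q / (4 * D ^ 2))
            = (64 * D ^ 2 - 6 * D * d ^ 2 - q * d ^ 2) / (4 * D ^ 2 * d ^ 2)) by (field; lra).
    assert (0 <= (64 * D ^ 2 - 6 * D * d ^ 2 - q * d ^ 2) / (4 * D ^ 2 * d ^ 2))
      by (apply Rdiv_le_0_compat; [exact Hnum |
          apply Rmult_lt_0_compat; [apply Rmult_lt_0_compat|]; try apply pow_lt; lra]).
    lra. }
  rewrite <- (sqrt_pow2 (4 * m / d)) by (apply Rdiv_le_0_compat; lra).
  apply sqrt_le_1_alt. eapply Rle_trans; [apply gWick_rot_field_le; unfold D in *; lra|].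
  rewrite dot_self_norm. fold D q m.
  replace ((4 * m / d) ^ 2) with (m ^ 2 * (16 / d ^ 2)) by (field; lra).
  apply Rmult_le_compat_l; [apply pow2_ge_0 | exact Hfrac].
Qed.

Lemma segment_bounds (P V : M2) d t :
  0 < d <= det P -> norm P <= 2 -> norm V <= d / 8 -> 0 <= t <= 1 ->
  d / 2 <= det (plus P (scal t V)) /\ dot (plus P (scal t V)) (plus P (scal t V)) <= 6.
Proof.
  intros [Hd HdP] HP HV Ht. set (m := norm V) in *.
  pose proof (norm_ge_0 V) as Hm. fold m in Hm.
  assert (HPP : dot P P <= 4) by (rewrite dot_self_norm; pose proof (norm_ge_0 P); nra).
  assert (HVV : dot V V = m ^ 2) by apply dot_self_norm.
  assert (Hd2 : d <= 2) by (pose proof (abs_det_le P) as H; apply Rabs_le_between in H; lra).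
  assert (HPV : - m <= eta P V <= m).
  { pose proof (eta_sq_le P V) as H. rewrite HVV in H.
    pose proof (Rmult_le_compat_r (m ^ 2) _ _ (pow2_ge_0 m) HPP).
    assert (Hsq : Rsqr (eta P V) <= Rsqr m) by (rewrite !Rsqr_pow2; lra).
    apply Rsqr_le_abs_0 in Hsq. rewrite (Rabs_pos_eq m) in Hsq by exact Hm.
    now apply Rabs_le_between. }
  assert (HVV' : eta V V <= m ^ 2 / 2)
    by (rewrite eta_self, <- HVV; pose proof (abs_det_le V) as H; apply Rabs_le_between in H; lra).
  split.
  - rewrite det_segment. assert (0 <= t ^ 2 <= 1) by (simpl; nra). pose proof (pow2_ge_0 m). nra.
  - rewrite dot_self_norm.
    assert (norm (plus P (scal t V)) <= 2 + m).
    { pose proof (norm_triangle P (scal t V)) as Htr.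
      pose proof (norm_scal t V) as Hs. unfold abs in Hs; simpl in Hs.
      rewrite Rabs_pos_eq in Hs by lra. fold m in Hs.
      eapply Rle_trans; [exact Htr|]. apply Rplus_le_compat; [exact HP|].
      eapply Rle_trans; [exact Hs|]. nra. }
    pose proof (norm_ge_0 (plus P (scal t V))). nra.
Qed.

Lemma wick_dist_lt_segment (P Q : M2) d eps :
  0 < d <= det P -> norm P <= 2 -> norm (minus Q P) <= d / 8 ->
  4 * norm (minus Q P) / d < eps -> wick_dist_lt rot_field P Q eps.
Proof.
  intros Hd HP HV Heps.
  set (V := minus Q P : M2) in *. set (c := fun t : R => plus P (scal t V) : M2).
  assert (Hd2 : d <= 2)
    by (pose proof (abs_det_le P) as H; apply Rabs_le_between in H;
        rewrite dot_self_norm in H; pose proof (norm_ge_0 P); nra).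
  assert (Hadm : admissible_curve c (fun _ => V)).
  { split; [|split].
    - intros t Ht. destruct (segment_bounds P V d t Hd HP HV Ht). unfold c. lra.
    - intros t _. apply is_derive_segment.
    - intros t _. apply continuous_const. }
  exists c, (fun _ => V). split; [exact Hadm|]. split; [|split].
  - exists 1. split; [lra|]. apply M2_ext; unfold c; unfold_M2; ring.
  - exists 1. split; [lra|]. apply M2_ext; unfold c, V; unfold_M2; ring.
  - eapply Rle_lt_trans; [|exact Heps]. unfold wick_length.
    apply Rle_trans with (RInt (fun _ => 4 * norm V / d) 0 1).
    + apply RInt_le; [lra | apply (ex_RInt_wick_integrand c (fun _ => V) Hadm)
                     | apply ex_RInt_const |].
      intros t Ht. destruct (segment_bounds P V d t Hd HP HV ltac:(lra)).
      apply sqrt_gWick_rot_field_le; unfold c; lra.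
    + rewrite RInt_const. unfold scal; simpl; unfold mult; simpl. lra.
Qed.

(** * Completeness *)

Lemma dot_self_decomp A : dot A A = 4 * rho2 A - 2 * det A.
Proof. unfold dot, rho2, conf_dot, det. field. Qed.

Lemma inv_sqrt_sq r : 0 < r -> (/ sqrt r) ^ 2 = / r.
Proof. intros Hr. rewrite pow_inv, pow2_sqrt by lra. reflexivity. Qed.

Lemma det_normalize A : 0 < det A -> det (normalize A) = exp (ldet A).
Proof.
  intros H. pose proof (det_le_rho2 A). unfold normalize, ldet.
  rewrite det_scal, inv_sqrt_sq by lra.
  rewrite exp_ln by (apply Rdiv_lt_0_compat; lra). field. lra.
Qed.

Lemma norm_normalize_bounds A : 0 < det A -> 1 <= norm (normalize A) <= 2.
Proof.
  intros H. pose proof (det_le_rho2 A).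
  assert (Hd : dot (normalize A) (normalize A) = 4 - 2 * (det A / rho2 A)).
  { unfold normalize. replace (dot _ _) with ((/ sqrt (rho2 A)) ^ 2 * dot A A)
      by (unfold dot; unfold_M2; ring).
    rewrite inv_sqrt_sq, dot_self_decomp by lra. field. lra. }
  assert (0 < det A / rho2 A <= 1).
  { split; [apply Rdiv_lt_0_compat; lra|].
    unfold Rdiv. rewrite <- (Rinv_r (rho2 A)) by lra.
    apply Rmult_le_compat_r; [left; apply Rinv_0_lt_compat|]; lra. }
  rewrite norm_M2, <- sqrt_1, <- (sqrt_pow2 2) by lra.
  split; apply sqrt_le_1_alt; lra.
Qed.

Lemma proj_eq_normalize A : 0 < det A ->
  proj_eq A (normalize A) /\ proj_eq A (opp (normalize A)).
Proof.
  intros H. pose proof (det_le_rho2 A).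
  assert (Hs : / sqrt (rho2 A) <> 0) by (apply Rinv_neq_0_compat, Rgt_not_eq, sqrt_lt_R0; lra).
  split.
  - exists (/ sqrt (rho2 A)). split; [exact Hs | reflexivity].
  - exists (- / sqrt (rho2 A)). split; [lra|].
    unfold normalize. apply M2_ext; unfold_M2; ring.
Qed.

Lemma det_opp X : det (opp X) = det X.
Proof. unfold det; unfold_M2. ring. Qed.

Definition wick_cauchy (F : M2 -> M2) (u : nat -> M2) : Prop :=
  forall eps, 0 < eps -> exists N : nat, forall m n, (N <= m)%nat -> (N <= n)%nat ->
    wick_dist_lt F (u m) (u n) eps.

Lemma wick_cauchy_det_normalize_lower_bound u : (forall n, 0 < det (u n)) ->
  wick_cauchy rot_field u ->
  exists q N, 0 < q /\ forall n, (N <= n)%nat -> q <= det (normalize (u n)).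
Proof.
  intros Hu Hcau. destruct (Hcau 1 Rlt_0_1) as [N0 HN0].
  exists (exp (ldet (u N0) - 2)), N0. split; [apply exp_pos|].
  intros n Hn. rewrite det_normalize by apply Hu. apply Rlt_le, exp_increasing.
  pose proof (wick_dist_lt_ldet _ _ _ (Hu N0) (Hu n) (HN0 N0 n (le_n _) Hn)) as H.
  apply Rabs_def2 in H. lra.
Qed.

Lemma wick_cauchy_normalize_sign_close u : (forall n, 0 < det (u n)) ->
  wick_cauchy rot_field u ->
  forall eps, 0 < eps -> exists N, forall m n, (N <= m)%nat -> (N <= n)%nat ->
    sign_close eps (normalize (u m)) (normalize (u n)).
Proof.
  intros Hu Hcau eps Heps. destruct (Hcau (eps / 2)) as [N HN]; [lra|].
  exists N. intros m n Hm Hn.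
  replace eps with (2 * (eps / 2)) by field.
  exact (wick_dist_lt_normalize _ _ _ (Hu m) (Hu n) (HN m n Hm Hn)).
Qed.

Lemma wick_dist_lt_near_normalize A P B q eps : 0 < det A ->
  P = normalize A \/ P = opp (normalize A) -> 0 < q <= det (normalize A) ->
  norm (minus B P) <= q / 8 -> norm (minus B P) < q * eps / 4 ->
  wick_dist_lt rot_field A B eps.
Proof.
  intros HA HP Hq Hnear Heps.
  destruct (proj_eq_normalize A HA) as [Hp Hp'].
  apply (wick_dist_lt_proj_eq_l _ _ P); [destruct HP as [-> | ->]; assumption|].
  apply (wick_dist_lt_segment P B q eps); [| | exact Hnear |].
  - destruct HP as [-> | ->]; rewrite ?det_opp; lra.
  - replace (norm P) with (norm (normalize A))
      by (destruct HP as [-> | ->]; [reflexivity | symmetry; exact (norm_opp _)]).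
    apply norm_normalize_bounds, HA.
  - apply Rmult_lt_reg_r with q; [lra|].
    unfold Rdiv. rewrite Rmult_assoc, Rinv_l, Rmult_1_r by lra. lra.
Qed.

Lemma rot_field_complete : wick_complete rot_field.
Proof.
  intros u Hu Hcau. fold (wick_cauchy rot_field u) in Hcau.
  destruct (wick_cauchy_det_normalize_lower_bound u Hu Hcau) as (q & N0 & Hq & HqN).
  destruct (cauchy_sign_lift (fun n => normalize (u n)) 1 Rlt_0_1) as (v & Hv & Hvc).
  { intros n. apply norm_normalize_bounds, Hu. }
  { now apply wick_cauchy_normalize_sign_close. }
  destruct (M2_complete v Hvc) as [B HB].
  assert (Hconv : forall eps, 0 < eps -> exists N, forall n, (N <= n)%nat ->
                    wick_dist_lt rot_field (u n) B eps).
  { intros eps Heps. set (r := Rmin (q / 8) (q * eps / 4)).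
    assert (0 < r) by (apply Rmin_glb_lt; [lra | apply Rdiv_lt_0_compat; [nra | lra]]).
    destruct (HB r) as [N HN]; [assumption|].
    exists (Nat.max N N0). intros n Hn.
    assert (Hnear : norm (minus B (v n)) < r).
    { eapply Rle_lt_trans; [apply Req_le; exact (norm_minus_sym B (v n)) | apply HN; lia]. }
    apply (wick_dist_lt_near_normalize (u n) (v n) B q eps (Hu n) (Hv n)).
    - split; [exact Hq | apply HqN; lia].
    - pose proof (Rmin_l (q / 8) (q * eps / 4)) as Hr. fold r in Hr. lra.
    - pose proof (Rmin_r (q / 8) (q * eps / 4)) as Hr. fold r in Hr. lra. }
  exists B. split; [|exact Hconv].
  destruct (Hconv 1 Rlt_0_1) as [N HN]. exact (wick_dist_lt_det_pos _ _ _ _ (HN N (le_n N))).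
Qed.

Theorem mainTheorem15 :
  exists X : M2 -> M2, timelike_field_on_closure X /\ wick_complete X.
Proof. exists rot_field. split; [exact rot_field_timelike | exact rot_field_complete]. Qed.
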